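(* Let $\hat S$ be a finite set of graphs with a distance $D$ (nonnegative, symmetric, satisfying the triangle inequality), and let $N\ge1$. Let the diversity $\mathrm{div}$ be one of: Average $\frac{2}{N(N-1)}\sum_{i\ne j}D(G_i,G_j)$, Bottleneck $\min_{i\neq j}D(G_i,G_j)$, or Energy with parameter $\gamma>0$, $-\frac{1}{N(N-1)}\sum_{i\ne j}D(G_i,G_j)^{-\gamma}$. Let $S$ be the set of $N$ graphs selected from $\hat S$ by the greedy algorithm, and let $\bar S$ be a maximally diverse subset of $\hat S$ with $|\bar S|=N$. Then $\mathrm{div}(S)\ge\frac12\,\mathrm{div}(\bar S)$ for Average and for Bottleneck, and $\mathrm{div}(S)\ge 2^{\gamma}\,\mathrm{div}(\bar S)$ for Energy with parameter $\gamma$.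
   Context: Greedy algorithm: start with $S=\emptyset$; at the first step add a graph of $\hat S$ chosen uniformly at random; at each subsequent step add the graph $G\in\hat S$ with the best fitness with respect to the current $S$, where the fitness is $\sum_{A\in S}D(G,A)$ (to be maximized) for Average, $\min_{A\in S}D(G,A)$ (to be maximized) for Bottleneck, and $\sum_{A\in S}D(G,A)^{-\gamma}$ (to be minimized) for Energy; stop after $N$ graphs have been selected. Note that Energy values are nonpositive, so the Energy inequality says the energy sum of $S$ is at most $2^\gamma$ times that of $\bar S$. *)

From HB Require Import structures.
From mathcomp Require Import all_boot all_order all_algebra.
From mathcomp Require Import reals exp.
Set Implicit Arguments. Unset Strict Implicit. Unset Printing Implicit Defensive.
Import Order.TTheory GRing.Theory Num.Theory.
Local Open Scope ring_scope.

Section Diversity.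
Variables (R : realType) (T : finType) (D : T -> T -> R).

Definition div_avg (A : {set T}) : R :=
  2 / (#|A|%:R * (#|A|%:R - 1)) *
  \sum_(x in A) \sum_(y in A | y != x) D x y.

(* minimum of D over ordered pairs of distinct elements of A; 0 if there is no
   such pair (only possible when #|A| <= 1). *)
Definition div_bottleneck (A : {set T}) : R :=
  if [pick p : T * T | (p.1 \in A) && (p.2 \in A) && (p.1 != p.2)] is Some p0 then
    \big[Num.min/D p0.1 p0.2]_(p : T * T | (p.1 \in A) && (p.2 \in A) && (p.1 != p.2))
      D p.1 p.2
  else 0.

Definition div_energy (gamma : R) (A : {set T}) : R :=
  - (1 / (#|A|%:R * (#|A|%:R - 1))) *
  \sum_(x in A) \sum_(y in A | y != x) D x y `^ (- gamma).

Definition fit_avg (S : seq T) (G : T) : R := \sum_(A <- S) D G A.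
Definition fit_bottleneck (S : seq T) (G : T) : R :=
  \big[Num.min/D G (head G S)]_(A <- S) D G A.
Definition fit_energy (gamma : R) (S : seq T) (G : T) : R :=
  \sum_(A <- S) D G A `^ (- gamma).

(* s is a possible run of the greedy algorithm selecting N graphs from the whole
   finite type T (= S-hat): the first element is arbitrary (any outcome of the
   random choice), and every later element x, chosen when the current selection
   is the prefix p, is a not-yet-selected graph whose fitness is best among all
   not-yet-selected graphs; [better a b] means "b is at least as good as a"
   (ties broken arbitrarily). *)
Definition greedy_run (fit : seq T -> T -> R) (better : R -> R -> bool)
    (N : nat) (s : seq T) : Prop :=
  [/\ size s = N, uniq s &
      forall p x q, s = p ++ x :: q -> p != [::] ->
        forall G, G \notin p -> better (fit p G) (fit p x)].

Definition max_diverse (div : {set T} -> R) (N : nat) (Sbar : {set T}) : Prop :=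
  #|Sbar| = N /\ forall A : {set T}, #|A| = N -> div A <= div Sbar.

End Diversity.

From HB Require Import structures.
From mathcomp Require Import all_boot all_order all_algebra.
From mathcomp Require Import reals exp.
From mathcomp Require Import lra.
Set Implicit Arguments. Unset Strict Implicit. Unset Printing Implicit Defensive.
Import Order.TTheory GRing.Theory Num.Theory.
Local Open Scope ring_scope.

(* Let s_0, ..., s_(N-1) be the greedy picks.  Enumerate the optimal set as
   o_0, ..., o_(N-1), where o_i is a point of the optimal set, not yet used,
   that is nearest to s_i (s_i itself whenever it is available).  For i < j
   the triangle inequality and the choice of o_i give
   D(o_i, o_j) <= D(o_i, s_i) + D(s_i, o_j) <= 2 D(s_i, o_j),
   and o_j is not among s_0, ..., s_(j-1), so it was a candidate when s_j was
   chosen.  Hence the fitness of s_j with respect to s_0, ..., s_(j-1) is at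
   least as good as that of o_j, which is within a factor 2 (resp. 2^gamma)
   of the fitness of o_j with respect to o_0, ..., o_(j-1).  Summing over j
   (Average, Energy) or taking the minimum (Bottleneck) gives the bounds. *)

Lemma powRN_le_scale (R : realType) (a b c g : R) :
  0 < c -> 0 <= g -> 0 < b -> b <= c * a -> a `^ (- g) <= c `^ g * b `^ (- g).
Proof.
move=> c0 g0 b0 bca; have a0 : 0 < a by rewrite -(pmulr_rgt0 _ c0) (lt_le_trans b0).
rewrite !powRN ler_pdivlMr ?powR_gt0 // mulrC ler_pdivrMr ?powR_gt0 //.
rewrite -powRM ?(ltW c0) ?(ltW a0) //.
apply: (ge0_ler_powR g0) => //; rewrite nnegrE; first exact: ltW.
exact/ltW/mulr_gt0.
Qed.

Section PairSums.
Variables (R : realType) (T : finType) (x0 : T).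
Implicit Types (F : T -> T -> R) (s o : seq T).

Definition pair_sum F s := \sum_(x <- s) \sum_(y <- s | y != x) F x y.

Lemma pair_sum_set F s : uniq s ->
  \sum_(x in [set x in s]) \sum_(y in [set x in s] | y != x) F x y = pair_sum F s.
Proof.
move=> us; rewrite /pair_sum big_uniq //; apply: eq_big => [x|x _]; first by rewrite inE.
rewrite [RHS]big_mkcond big_uniq // big_mkcondr; apply: eq_bigl => y.
by rewrite inE.
Qed.

Lemma pair_sum_rcons F p x : (forall a b, F a b = F b a) -> x \notin p ->
  pair_sum F (rcons p x) = pair_sum F p + 2 * \sum_(y <- p) F x y.
Proof.
move=> Fsym xp; rewrite /pair_sum -cats1 big_cat big_seq1 /=.
have sum_cat1 a : \sum_(y <- p ++ [:: x] | y != a) F a y =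
    \sum_(y <- p | y != a) F a y + (if x != a then F a x else 0).
  by rewrite big_cat /= big_mkcond [X in _ + X]big_mkcond big_seq1 -big_mkcond.
have neq_x a : a \in p -> x != a by apply: contraTneq => <-.
rewrite sum_cat1 eqxx addr0; under eq_bigr => a _ do rewrite sum_cat1.
rewrite big_split /= -addrA mulr2n mulrDl mul1r; congr (_ + (_ + _)).
  by rewrite big_seq [RHS]big_seq; apply: eq_bigr => a /neq_x ->; rewrite Fsym.
rewrite big_seq_cond [RHS]big_seq; apply: eq_bigl => a.
by case: (boolP (a \in p)) => // /neq_x; rewrite eq_sym.
Qed.

Lemma nth_notin_take s j : uniq s -> (j < size s)%N -> nth x0 s j \notin take j s.
Proof. by move=> us js; rewrite in_take_leq ?(ltnW js) // index_uniq // ltnn. Qed.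

Lemma pair_sum_take F s j : (forall a b, F a b = F b a) -> uniq s -> (j <= size s)%N ->
  pair_sum F (take j s) = 2 * \sum_(i < j) \sum_(y <- take i s) F (nth x0 s i) y.
Proof.
move=> Fsym us; elim: j => [_|j IH js]; first by rewrite take0 /pair_sum big_nil big_ord0 mulr0.
rewrite (take_nth x0 js) pair_sum_rcons ?nth_notin_take // (IH (ltnW js)).
by rewrite big_ord_recr mulrDr.
Qed.

Lemma ler_pair_sum F c s o : (forall a b, F a b = F b a) -> uniq s -> uniq o ->
  size o = size s ->
  (forall j, (j < size s)%N -> \sum_(y <- take j o) F (nth x0 o j) y <=
                                c * \sum_(y <- take j s) F (nth x0 s j) y) ->
  pair_sum F o <= c * pair_sum F s.
Proof.
move=> Fsym us uo so le_s.
rewrite -(take_size s) -(take_size o) !pair_sum_take // so mulrCA ler_wpM2l // mulr_sumr.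
by apply: ler_sum => j _; exact: le_s.
Qed.

Lemma sum_take (G : T -> R) s j : (j <= size s)%N ->
  \sum_(y <- take j s) G y = \sum_(i < j) G (nth x0 s i).
Proof.
move=> js; rewrite (big_nth x0) size_takel // big_mkord; apply: eq_bigr => i _.
by rewrite nth_take.
Qed.

Lemma ler_sum_take (F G : T -> R) c s o j : (j <= size s)%N -> (j <= size o)%N ->
  (forall i, (i < j)%N -> F (nth x0 o i) <= c * G (nth x0 s i)) ->
  \sum_(y <- take j o) F y <= c * \sum_(y <- take j s) G y.
Proof.
move=> js jo le_FG; rewrite !sum_take // mulr_sumr.
by apply: ler_sum => i _; exact: le_FG.
Qed.

End PairSums.

Section Fitness.
Variables (R : realType) (T : finType) (D : T -> T -> R) (x0 : T).

Lemma greedy_run_take (fit : seq T -> T -> R) better N s j G :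
  greedy_run fit better N s -> (0 < j < N)%N -> G \notin take j s ->
  better (fit (take j s) G) (fit (take j s) (nth x0 s j)).
Proof.
case=> sN _ greedy /andP[j0 jN] Gs; apply: (greedy _ _ (drop j.+1 s)) => //.
  by rewrite -drop_nth ?cat_take_drop // sN.
by rewrite -size_eq0 size_takel ?sN ?(ltnW jN) // -lt0n.
Qed.

Lemma fit_bottleneck_le (p : seq T) G y : y \in p -> fit_bottleneck D p G <= D G y.
Proof. by move=> yp; apply: ge_bigmin_seq. Qed.

Lemma le_fit_bottleneck (p : seq T) G m : p != [::] -> (forall y, y \in p -> m <= D G y) ->
  m <= fit_bottleneck D p G.
Proof.
case: p => // y p _ le_m; rewrite /fit_bottleneck big_seq.
by apply: le_bigmin => [|z]; apply: le_m; rewrite ?mem_head.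
Qed.

Lemma div_bottleneck_le (A : {set T}) x y : x \in A -> y \in A -> x != y ->
  div_bottleneck D A <= D x y.
Proof.
move=> xA yA xy; rewrite /div_bottleneck; case: pickP => [p0 _|/(_ (x, y))].
  by apply: (@bigmin_le_cond _ R _ _ (x, y) _ (fun p : T * T => D p.1 p.2)); rewrite /= xA yA xy.
by rewrite /= xA yA xy.
Qed.

Lemma le_div_bottleneck (A : {set T}) m : (1 < #|A|)%N ->
  (forall x y, x \in A -> y \in A -> x != y -> m <= D x y) -> m <= div_bottleneck D A.
Proof.
move=> /card_gt1P[x [y [xA yA xy]]] le_m; rewrite /div_bottleneck.
case: pickP => [p0 /andP[/andP[p1 p2] p12]|/(_ (x, y))]; last by rewrite /= xA yA xy.
by apply: le_bigmin => [|p /andP[/andP[q1 q2] q12]]; apply: le_m.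
Qed.

Lemma div_bottleneck_small (A : {set T}) : (#|A| <= 1)%N -> div_bottleneck D A = 0.
Proof.
move=> A1; rewrite /div_bottleneck; case: pickP => // p /andP[/andP[p1 p2] p12].
by have := A1; rewrite leqNgt => /negP; case; apply/card_gt1P; exists p.1, p.2.
Qed.

End Fitness.

Section Matching.
Variables (R : realType) (T : finType) (D : T -> T -> R) (x0 : T).
Hypotheses (D0 : forall x y, 0 <= D x y) (Dxx : forall x, D x x = 0)
           (Dsym : forall x y, D x y = D y x) (Dtri : forall x y z, D x z <= D x y + D y z).

Lemma exists_nearest x (O : seq T) : O != [::] ->
  exists2 y, y \in O & (forall z, z \in O -> D x y <= D x z) /\ (x \in O -> y = x).
Proof.
case: (boolP (x \in O)) => [xO _|xO]; first by exists x => //; split=> // z _; rewrite Dxx D0.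
case: O xO => // y O xO _.
have [z zO z_min] := @arg_minP _ R T y [in y :: O] (D x) (mem_head _ _).
by exists z => //; split=> // /(negP xO).
Qed.

Definition matching (s o : seq T) :=
  forall i j, (i < j < size s)%N ->
    nth x0 s i != nth x0 o j /\ D (nth x0 o i) (nth x0 o j) <= 2 * D (nth x0 s i) (nth x0 o j).

Lemma exists_matching s (O : seq T) : uniq O -> size O = size s ->
  exists2 o, perm_eq o O & matching s o.
Proof.
elim: s O => [|x s IH] O uO sO; first by exists O => // i j /andP[_].
have [o0 o0O [o0_min o0x]] : exists2 o0, o0 \in O &
    (forall z, z \in O -> D x o0 <= D x z) /\ (x \in O -> o0 = x).
  by apply: exists_nearest; case: O sO {uO}.
have sO' : size (rem o0 O) = size s by rewrite size_rem // sO.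
have [o' perm_o' match_o'] := IH (rem o0 O) (rem_uniq _ uO) sO'.
exists (o0 :: o').
  by rewrite (permPr (perm_to_rem o0O)) perm_cons.
move=> [|i] [|j] //=; last exact: match_o'.
move=> js.
have yO' : nth x0 o' j \in rem o0 O.
  by rewrite -(perm_mem perm_o') mem_nth // (perm_size perm_o') sO'.
have yO := mem_rem yO'; split.
  apply: contraTneq yO' => <-; case: (boolP (x \in O)) => [/o0x <-|xO].
    by rewrite mem_rem_uniqF.
  by apply: contraNN xO => /mem_rem.
apply: le_trans (Dtri _ x _) _; rewrite (Dsym o0) mulr2n mulrDl mul1r lerD2r.
exact: o0_min.
Qed.

Lemma exists_matching_set s (A : {set T}) : #|A| = size s ->
  exists o, [/\ uniq o, size o = size s, A = [set x in o] & matching s o].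
Proof.
move=> As; have sA : size (enum A) = size s by rewrite -cardE.
have [o perm_o match_o] := exists_matching (enum_uniq A) sA.
exists o; split=> //; first by rewrite (perm_uniq perm_o) enum_uniq.
  by rewrite (perm_size perm_o) -cardE.
by apply/setP => x; rewrite inE (perm_mem perm_o) mem_enum.
Qed.

Lemma matching_notin_take s o j : matching s o -> (j < size s)%N ->
  nth x0 o j \notin take j s.
Proof.
move=> match_o js; rewrite in_take_leq ?(ltnW js) //; apply/negP => ij.
have xs : nth x0 o j \in s by rewrite -index_mem (ltn_trans ij js).
by have [] := match_o _ _ (introT andP (conj ij js)); rewrite nth_index ?eqxx.
Qed.

Lemma pairwise_lower_bound m s :
  (forall i j, (i < j < size s)%N -> m <= D (nth x0 s i) (nth x0 s j)) ->
  forall x y, x \in s -> y \in s -> x != y -> m <= D x y.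
Proof.
move=> le_m x y xs ys; rewrite -(nth_index x0 xs) -(nth_index x0 ys).
move: xs ys; rewrite -!index_mem => xs ys.
case: (ltngtP (index x s) (index y s)) => [lt_xy|lt_yx|->]; last by rewrite eqxx.
- by move=> _; apply: le_m; rewrite lt_xy.
- by move=> _; rewrite Dsym; apply: le_m; rewrite lt_yx.
Qed.

End Matching.

Lemma pair_count_ge0 (R : realType) (n : nat) : 0 <= n%:R * (n%:R - 1) :> R.
Proof. by case: n => [|n]; rewrite ?mul0r // mulr_ge0 // subr_ge0 ler1n. Qed.

Lemma card_set_uniq (T : finType) (s : seq T) : uniq s -> #|[set x in s]| = size s.
Proof. by move=> us; rewrite cardsE; apply/card_uniqP. Qed.

Section Greedy.
Variables (R : realType) (T : finType) (D : T -> T -> R) (N : nat).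
Hypotheses (D0 : forall x y, 0 <= D x y) (Dxx : forall x, D x x = 0)
           (Dsym : forall x y, D x y = D y x) (Dtri : forall x y z, D x z <= D x y + D y z)
           (N1 : (1 <= N)%N).

Lemma greedy_avg_half s (Sbar : {set T}) :
  greedy_run (fit_avg D) (fun a b => a <= b) N s -> #|Sbar| = N ->
  1 / 2 * div_avg D Sbar <= div_avg D [set x in s].
Proof.
move=> run cardS; have [sN us _] := run.
have x0 : T by case: s sN {run us} => [sN|//]; move: N1; rewrite -sN.
have [o [uo os So match_o]] := exists_matching_set x0 D0 Dxx Dsym Dtri (etrans cardS (esym sN)).
have le_prefix j : (j < size s)%N -> \sum_(y <- take j o) D (nth x0 o j) y <=
                                     2 * \sum_(y <- take j s) D (nth x0 s j) y.
  case: j => [|j] js; first by rewrite !take0 !big_nil mulr0.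
  apply: (@le_trans _ _ (2 * fit_avg D (take j.+1 s) (nth x0 o j.+1))).
    apply: (ler_sum_take (x0 := x0)); rewrite ?os ?(ltnW js) // => i ij.
    by rewrite Dsym (Dsym _ (nth x0 s i)); apply: (match_o _ _ _).2; rewrite ij.
  rewrite ler_wpM2l //; apply: (greedy_run_take _ run); first by rewrite -sN.
  exact: matching_notin_take match_o js.
have := ler_pair_sum (x0 := x0) Dsym us uo os le_prefix.
rewrite /div_avg So !card_set_uniq // !pair_sum_set // os mulrCA => le_os.
rewrite ler_wpM2l ?divr_ge0 ?pair_count_ge0 //; lra.
Qed.

Lemma greedy_energy_bound g s (Sbar : {set T}) : 0 < g ->
  (forall x y, x != y -> 0 < D x y) ->
  greedy_run (fit_energy D g) (fun a b => b <= a) N s -> #|Sbar| = N ->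
  2 `^ g * div_energy D g Sbar <= div_energy D g [set x in s].
Proof.
move=> g0 Dpos run cardS; have [sN us _] := run.
have x0 : T by case: s sN {run us} => [sN|//]; move: N1; rewrite -sN.
have [o [uo os So match_o]] := exists_matching_set x0 D0 Dxx Dsym Dtri (etrans cardS (esym sN)).
pose F x y := D x y `^ (- g).
have Fsym x y : F x y = F y x by rewrite /F Dsym.
have le_prefix j : (j < size o)%N -> \sum_(y <- take j s) F (nth x0 s j) y <=
                                     2 `^ g * \sum_(y <- take j o) F (nth x0 o j) y.
  rewrite os; case: j => [|j] js; first by rewrite !take0 !big_nil mulr0.
  apply: (@le_trans _ _ (fit_energy D g (take j.+1 s) (nth x0 o j.+1))).
    apply: (greedy_run_take _ run); first by rewrite -sN.
    exact: matching_notin_take match_o js.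
  apply: (ler_sum_take (x0 := x0)); rewrite ?os ?(ltnW js) // => i ij.
  have [_ le_oo] := match_o _ _ (introT andP (conj ij js)).
  apply: powRN_le_scale; rewrite ?(ltW g0) // 1?(Dsym _ (nth x0 s i)) 1?(Dsym _ (nth x0 o i)) //.
  by apply: Dpos; rewrite nth_uniq ?os ?(ltn_trans ij) // ltn_eqF.
have := ler_pair_sum (x0 := x0) Fsym uo us (esym os) le_prefix.
rewrite /div_energy So !card_set_uniq // !pair_sum_set // os mulrCA => le_so.
by rewrite !mulNr lerN2 ler_wpM2l ?divr_ge0 ?pair_count_ge0.
Qed.

Lemma greedy_bottleneck_half s (Sbar : {set T}) :
  greedy_run (fit_bottleneck D) (fun a b => a <= b) N s -> #|Sbar| = N ->
  1 / 2 * div_bottleneck D Sbar <= div_bottleneck D [set x in s].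
Proof.
move=> run cardS; have [sN us _] := run.
case: (leqP N 1) => [N_le1|N_gt1].
  by rewrite !div_bottleneck_small ?card_set_uniq ?sN ?cardS ?mulr0.
have x0 : T by case: s sN {run us} => [sN|//]; move: N_gt1; rewrite -sN.
have [o [uo os So match_o]] := exists_matching_set x0 D0 Dxx Dsym Dtri (etrans cardS (esym sN)).
set m := div_bottleneck D Sbar.
have le_os i j : (i < j < size s)%N -> 1 / 2 * m <= D (nth x0 o j) (nth x0 s i).
  move=> ijs; have [_ le_oo] := match_o _ _ ijs; move: ijs => /andP[ij js].
  have : m <= D (nth x0 o i) (nth x0 o j).
    apply: div_bottleneck_le; rewrite ?So ?inE ?mem_nth ?os ?(ltn_trans ij) //.
    by rewrite nth_uniq ?os ?(ltn_trans ij) // ltn_eqF.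
  rewrite (Dsym _ (nth x0 s i)); lra.
apply: le_div_bottleneck; first by rewrite card_set_uniq // sN.
move=> x y; rewrite !inE; apply: (pairwise_lower_bound (x0 := x0)) => // {x y} i j /andP[ij js].
have j0 : (0 < j)%N by apply: leq_ltn_trans ij.
have si_take : nth x0 s i \in take j s.
  by rewrite in_take_leq ?(ltnW js) // index_uniq // (ltn_trans ij js).
have fit_o_le_s : fit_bottleneck D (take j s) (nth x0 o j) <=
                  fit_bottleneck D (take j s) (nth x0 s j).
  by apply: (greedy_run_take _ run); [rewrite j0 -sN | exact: matching_notin_take match_o js].
rewrite Dsym; apply: le_trans (le_trans _ fit_o_le_s) (fit_bottleneck_le D (nth x0 s j) si_take).
apply: le_fit_bottleneck => [|y]; first by apply: contraTneq si_take => ->.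
rewrite in_take_leq ?(ltnW js) // => yj; have ys : y \in s by rewrite -index_mem (ltn_trans yj).
by rewrite -(nth_index x0 ys); apply: le_os; rewrite yj.
Qed.

End Greedy.

Theorem theorem2 (R : realType) (T : finType) (D : T -> T -> R) (N : nat) :
  (forall x y, 0 <= D x y) ->
  (forall x, D x x = 0) ->
  (forall x y, D x y = D y x) ->
  (forall x y z, D x z <= D x y + D y z) ->
  (1 <= N)%N ->
  [/\ (forall (s : seq T) (Sbar : {set T}),
         greedy_run (fit_avg D) (fun a b => a <= b) N s ->
         max_diverse (div_avg D) N Sbar ->
         div_avg D [set x in s] >= 1 / 2 * div_avg D Sbar),
      (forall (s : seq T) (Sbar : {set T}),
         greedy_run (fit_bottleneck D) (fun a b => a <= b) N s ->
         max_diverse (div_bottleneck D) N Sbar ->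
         div_bottleneck D [set x in s] >= 1 / 2 * div_bottleneck D Sbar) &
      (forall gamma : R, 0 < gamma ->
         (forall x y, x != y -> 0 < D x y) ->
         forall (s : seq T) (Sbar : {set T}),
         greedy_run (fit_energy D gamma) (fun a b => b <= a) N s ->
         max_diverse (div_energy D gamma) N Sbar ->
         div_energy D gamma [set x in s] >= 2 `^ gamma * div_energy D gamma Sbar)].
Proof.
move=> D0 Dxx Dsym Dtri N1; split.
- by move=> s Sbar run [cardS _]; apply: greedy_avg_half run cardS.
- by move=> s Sbar run [cardS _]; apply: greedy_bottleneck_half run cardS.
- by move=> g g0 Dpos s Sbar run [cardS _]; apply: greedy_energy_bound g0 Dpos run cardS.
Qed.
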